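(* Let $R$ be a commutative ring with nonzero identity and $\delta$ an expansion of ideals of $R$ with $\delta(\{0\})=\{0\}$. Then $R$ is a field if and only if $R$ is a von Neumann regular ring and $\{0\}$ is a $\delta$-$n$-ideal of $R$.
   Context: An expansion of ideals of a ring $R$ is a map $\delta$ from the set of ideals of $R$ to itself such that $I\subseteq\delta(I)$ for every ideal $I$, and $\delta(I)\subseteq\delta(J)$ whenever $I\subseteq J$. $\sqrt{0}$ denotes the nilradical of $R$. Given an expansion $\delta$, a proper ideal $I$ of $R$ is a $\delta$-$n$-ideal if whenever $a,b\in R$ with $ab\in I$ and $a\notin\sqrt{0}$, then $b\in\delta(I)$. $R$ is von Neumann regular if for every $a\in R$ there is $x\in R$ with $a=a^2x$. *)

From mathcomp Require Import all_boot all_algebra.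
Set Implicit Arguments. Unset Strict Implicit. Unset Printing Implicit Defensive.
Import GRing.Theory.
Local Open Scope ring_scope.

Definition is_ideal (R : comNzRingType) (I : R -> Prop) : Prop :=
  [/\ I 0,
      (forall x y, I x -> I y -> I (x + y)),
      (forall x, I x -> I (- x)) &
      (forall r x, I x -> I (r * x))].

Definition subset_of (R : comNzRingType) (I J : R -> Prop) : Prop :=
  forall x, I x -> J x.

(* An expansion of ideals: maps ideals to ideals, extensive and monotone
   (only its behaviour on ideals matters). *)
Definition expansion (R : comNzRingType) (delta : (R -> Prop) -> (R -> Prop)) : Prop :=
  [/\ (forall I, is_ideal I -> is_ideal (delta I)),
      (forall I, is_ideal I -> subset_of I (delta I)) &
      (forall I J, is_ideal I -> is_ideal J -> subset_of I J ->
                   subset_of (delta I) (delta J))].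

Definition nilrad (R : comNzRingType) (a : R) : Prop := exists n : nat, a ^+ n = 0.

Definition zero_ideal (R : comNzRingType) : R -> Prop := fun x => x = 0.

Definition proper_ideal (R : comNzRingType) (I : R -> Prop) : Prop :=
  is_ideal I /\ exists x, ~ I x.

Definition delta_n_ideal (R : comNzRingType) (delta : (R -> Prop) -> (R -> Prop))
  (I : R -> Prop) : Prop :=
  proper_ideal I /\
  forall a b : R, I (a * b) -> ~ nilrad a -> delta I b.

Definition von_neumann_regular (R : comNzRingType) : Prop :=
  forall a : R, exists x : R, a = a ^+ 2 * x.

Definition is_field (R : comNzRingType) : Prop :=
  forall a : R, a != 0 -> exists b : R, a * b = 1.

From Pilot Require Import Defs.
From mathcomp Require Import all_boot all_algebra.
From mathcomp Require Import ring.

Set Implicit Arguments.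
Unset Strict Implicit.
Unset Printing Implicit Defensive.

Import GRing.Theory.
Local Open Scope ring_scope.

(* With delta(0) = 0, {0} is a delta-n-ideal exactly when it is an n-ideal:
   ab = 0 with a non-nilpotent forces b = 0.  In a field this holds since every
   nonzero element is invertible.  Conversely, in a von Neumann regular ring
   a = a^2 x gives a (1 - a x) = 0, and a nonzero a is not nilpotent because
   a = a^(k+1) x^k for all k; hence 1 - a x = 0 and x inverts a. *)

(* Qualified: ssralg has its own [proper_ideal]. *)
Definition n_ideal (R : comNzRingType) (I : R -> Prop) : Prop :=
  Defs.proper_ideal I /\ forall a b : R, I (a * b) -> ~ nilrad a -> I b.

Lemma zero_ideal_is_ideal (R : comNzRingType) : is_ideal (@zero_ideal R).
Proof.
split=> //= [x y -> ->|x ->|r x ->]; by rewrite ?addr0 ?oppr0 ?mulr0.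
Qed.

Lemma zero_ideal_proper (R : comNzRingType) : Defs.proper_ideal (@zero_ideal R).
Proof.
split; first exact: zero_ideal_is_ideal.
by exists 1; apply/eqP; exact: oner_neq0.
Qed.

Lemma delta_n_zero_idealE (R : comNzRingType)
    (delta : (R -> Prop) -> (R -> Prop))
    (delta0 : forall x : R, delta (@zero_ideal R) x <-> x = 0) :
  delta_n_ideal delta (@zero_ideal R) <-> n_ideal (@zero_ideal R).
Proof.
split=> -[proper0 nI]; split=> // a b ab0 /(nI a b ab0).
  by move/delta0.
by move=> b0; apply/delta0.
Qed.

Lemma regular_exprS (R : comNzRingType) (a x : R) :
  a = a ^+ 2 * x -> forall k : nat, a = a ^+ k.+1 * x ^+ k.
Proof.
move=> reg_a; elim=> [|k IHk]; first by rewrite expr1 expr0 mulr1.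
rewrite {1}IHk exprS {1}reg_a !exprS; ring.
Qed.

Lemma von_neumann_regular_nilrad0 (R : comNzRingType) (a : R) :
  von_neumann_regular R -> nilrad a -> a = 0.
Proof.
move=> reg [n an0]; have [x reg_a] := reg a.
by rewrite (regular_exprS reg_a n) exprS an0 mulr0 mul0r.
Qed.

Lemma field_von_neumann_regular (R : comNzRingType) :
  is_field R -> von_neumann_regular R.
Proof.
move=> field_R a; have [->|a_neq0] := eqVneq a 0; first by exists 0; rewrite mulr0.
have [b ab1] := field_R a a_neq0.
by exists b; rewrite expr2 -mulrA ab1 mulr1.
Qed.

Lemma field_n_ideal0 (R : comNzRingType) : is_field R -> n_ideal (@zero_ideal R).
Proof.
move=> field_R; split; first exact: zero_ideal_proper.
move=> a b ab0 a_nnil; have a_neq0 : a != 0.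
  by apply/eqP=> a0; apply: a_nnil; exists 1%N; rewrite expr1.
have [c ac1] := field_R a a_neq0.
by rewrite /zero_ideal -[b]mul1r -ac1 mulrAC ab0 mul0r.
Qed.

Lemma regular_n_ideal0_field (R : comNzRingType) :
  von_neumann_regular R -> n_ideal (@zero_ideal R) -> is_field R.
Proof.
move=> reg [_ nI] a a_neq0; have [x reg_a] := reg a.
have a_nnil : ~ nilrad a.
  by move=> /(von_neumann_regular_nilrad0 reg) a0; rewrite a0 eqxx in a_neq0.
have ann : zero_ideal (a * (1 - a * x)).
  by rewrite /zero_ideal mulrBr mulr1 mulrA -expr2 -reg_a subrr.
exists x; move/eqP: (nI _ _ ann a_nnil).
by rewrite subr_eq0 => /eqP <-.
Qed.

Theorem theorem2p10 (R : comNzRingType) (delta : (R -> Prop) -> (R -> Prop))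
  (hdelta : expansion delta)
  (hdelta0 : forall x : R, delta (@zero_ideal R) x <-> x = 0) :
  is_field R <-> (von_neumann_regular R /\ delta_n_ideal delta (@zero_ideal R)).
Proof.
rewrite delta_n_zero_idealE //; split.
- by move=> field_R; split; [exact: field_von_neumann_regular | exact: field_n_ideal0].
- by move=> [reg nI0]; exact: regular_n_ideal0_field.
Qed.
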